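(* In the Truthful Interval Covering setting with $n$ agents and unit-length intervals, every randomized mechanism that is a convex combination of $k$-th ordered statistic mechanisms has approximation ratio at least $3/2$, i.e., $\sup_{\mathcal{I}} \mathbb{E}[\mathrm{SC}(\mathcal{M}(\mathcal{I}))]/\min_C\mathrm{SC}(C)\ge 3/2$.
   Context: There are $n$ agents; agent $i$ has an interval $I_i=[s_i,s_i+1]$ of length $1$; an instance is $\mathcal{I}=(I_1,\dots,I_n)$. A unit covering interval $C$ is placed; $\mathrm{cost}_i(C)=1-|I_i\cap C|$ ($|\cdot|$ = length), $\mathrm{SC}(C)=\sum_i\mathrm{cost}_i(C)$, minimum over all unit intervals $C$. The $k$-th ordered statistic mechanism places $C$ at $[s_{(k)},s_{(k)}+1]$, where $s_{(k)}$ is the $k$-th smallest left endpoint. A convex combination of such mechanisms chooses index $k$ with a fixed probability $p_k$ (with $\sum_k p_k=1$, independent of the instance) and then applies the $k$-th ordered statistic mechanism. *)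

From HB Require Import structures.
From mathcomp Require Import all_boot all_order all_algebra.
From mathcomp Require Import reals.
Set Implicit Arguments. Unset Strict Implicit. Unset Printing Implicit Defensive.
Import Order.TTheory GRing.Theory Num.Theory.
Local Open Scope ring_scope.

Section Defs.
Variable R : realType.

Definition overlap (a b : R) : R :=
  Num.max 0 (Num.min (a + 1) (b + 1) - Num.max a b).

(* cost_i(C) = 1 - |I_i ∩ C|, with I_i = [si, si+1], C = [c, c+1] *)
Definition icost (si c : R) : R := 1 - overlap si c.

Definition SC (n : nat) (s : 'I_n -> R) (c : R) : R :=
  \sum_(i < n) icost (s i) c.

(* (k+1)-th smallest left endpoint (k is 0-based) *)
Definition order_stat (n : nat) (s : 'I_n -> R) (k : nat) : R :=
  nth 0 (sort <=%R [seq s i | i <- enum 'I_n]) k.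

(* expected social cost of the convex combination with probabilities q
   (q k = probability of the (k+1)-th ordered statistic mechanism) *)
Definition exp_SC (n : nat) (q : 'I_n -> R) (s : 'I_n -> R) : R :=
  \sum_(k < n) q k * SC s (order_stat s k).

End Defs.

From mathcomp Require Import all_boot all_order all_algebra.
From mathcomp Require Import reals.
From mathcomp Require Import ring lra.
Import Order.TTheory GRing.Theory Num.Theory.
Local Open Scope ring_scope.

(* Take 2m agents.  In the instance [pile_left m], m agents sit at 0 and one
   agent sits at each of 1, ..., m; in [pile_right m], one agent sits at each
   of 0, ..., m-1 and m agents sit at m.  Both have optimal cost m, since the
   agents split into m pairs with disjoint intervals.  The k-th ordered
   statistic costs m on one instance and 2m - 1 on the other, so for any
   probabilities the two expected costs add up to 3m - 1, and one of them is
   at least (3/2 - 1/(2m)) m. *)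

Definition pile_left_pos (m j : nat) : nat := if (j < m)%N then 0 else (j - m).+1.
Definition pile_right_pos (m j : nat) : nat := if (j < m)%N then j else m.

Lemma pile_left_pos_nondecr m : {homo pile_left_pos m : a b / (a <= b)%N}.
Proof.
move=> a b hab; rewrite /pile_left_pos.
case: (ltnP a m) => ha; case: (ltnP b m) => hb //; last by rewrite ltnS leq_sub2r.
by have := leq_ltn_trans (leq_trans ha hab) hb; rewrite ltnn.
Qed.

Lemma pile_right_pos_nondecr m : {homo pile_right_pos m : a b / (a <= b)%N}.
Proof.
move=> a b hab; rewrite /pile_right_pos.
case: (ltnP a m) => ha; case: (ltnP b m) => hb //; first exact: ltnW.
by have := leq_ltn_trans (leq_trans ha hab) hb; rewrite ltnn.
Qed.

Lemma pile_left_pos_lo m (i : 'I_m) : pile_left_pos m i = 0.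
Proof. by rewrite /pile_left_pos ltn_ord. Qed.

Lemma pile_left_pos_hi m (i : 'I_m) : pile_left_pos m (m + i) = i.+1.
Proof. by rewrite /pile_left_pos ltnNge leq_addr addKn. Qed.

Lemma pile_right_pos_lo m (i : 'I_m) : pile_right_pos m i = i.
Proof. by rewrite /pile_right_pos ltn_ord. Qed.

Lemma pile_right_pos_hi m (i : 'I_m) : pile_right_pos m (m + i) = m.
Proof. by rewrite /pile_right_pos ltnNge leq_addr. Qed.

Section IntervalCovering.
Variable R : realType.

Lemma overlapE (a c : R) : overlap a c = Num.max 0 (1 - `|a - c|).
Proof.
rewrite /overlap; case: (leP a c) => hac.
- rewrite min_l ?lerD2r // ler0_norm ?subr_le0 //; congr Num.max; ring.
- rewrite min_r ?lerD2r ?ltW // gtr0_norm ?subr_gt0 //; congr Num.max; ring.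
Qed.

Lemma overlap_disjoint {a b : R} (c : R) : a + 1 <= b -> overlap a c + overlap b c <= 1.
Proof.
move=> hab; rewrite !overlapE.
have : 1 <= `|a - c| + `|b - c|.
  rewrite distrC addrC; apply: le_trans (ler_distD c b a).
  by rewrite ger0_norm; lra.
have := normr_ge0 (a - c); have := normr_ge0 (b - c).
by case: (leP 0 (1 - `|a - c|)); case: (leP 0 (1 - `|b - c|)); lra.
Qed.

Lemma icost_natr (a b : nat) : icost (a%:R : R) b%:R = (a != b)%:R.
Proof.
have dist_ge1 x y : (x < y)%N -> 1 <= `|x%:R - y%:R : R|.
  by move=> hxy; rewrite distrC -natrB ?normr_nat ?ler1n ?subn_gt0 //; exact: ltnW.
rewrite /icost overlapE; case: (ltngtP a b) => [hab|hab|->].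
- by rewrite max_l ?subr0 // subr_le0 dist_ge1.
- by rewrite distrC max_l ?subr0 // subr_le0 dist_ge1.
- by rewrite subrr normr0 subr0 max_r ?ler01 // subrr.
Qed.

Lemma SC_ge_disjoint_pairs (m : nat) (s : 'I_(m + m) -> R) (c : R) :
  (forall i : 'I_m, s (lshift m i) + 1 <= s (rshift m i)) -> m%:R <= SC s c.
Proof.
move=> hs; rewrite /SC big_split_ord /= -big_split /=.
have -> : m%:R = \sum_(i < m) (1 : R) by rewrite sumr_const card_ord.
apply: ler_sum => i _.
by have := overlap_disjoint c (hs i); rewrite /icost; lra.
Qed.

Lemma order_stat_nondecr {n : nat} {s : 'I_n -> R} {f : nat -> R} :
  {homo f : a b / (a <= b)%N >-> a <= b} -> s =1 f \o val ->
  forall k, (k < n)%N -> order_stat s k = f k.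
Proof.
move=> hf hs k hk; rewrite /order_stat (eq_map hs) map_comp val_enum_ord.
rewrite sorted_sort ?(nth_map 0%N) ?size_iota ?nth_iota //; first exact: le_trans.
apply: (homo_sorted hf); exact: iota_sorted.
Qed.

Lemma SC_natr (n : nat) (g : nat -> nat) (x : nat) :
  SC (fun i : 'I_n => (g i)%:R : R) x%:R = \sum_(i < n) ((g i != x)%:R : R).
Proof. by apply: eq_bigr => i _; rewrite icost_natr. Qed.

Lemma sum_ord_true (m : nat) (P : 'I_m -> bool) :
  (forall i, P i) -> \sum_(i < m) ((P i)%:R : R) = m%:R.
Proof.
by move=> hP; rewrite (eq_bigr (fun _ => 1)) ?sumr_const ?card_ord // => i _; rewrite hP.
Qed.

Lemma sum_ord_neq {m : nat} (k : 'I_m) :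
  \sum_(i < m) ((i != k :> nat)%:R : R) = m.-1%:R.
Proof.
rewrite (bigD1 k) //= eqxx add0r (eq_bigr (fun _ => 1)) ?sumr_const ?cardC1 ?card_ord //.
by move=> i; rewrite (inj_eq val_inj) => ->.
Qed.

Definition pile_left (m : nat) : 'I_(m + m) -> R := fun i => (pile_left_pos m i)%:R.
Definition pile_right (m : nat) : 'I_(m + m) -> R := fun i => (pile_right_pos m i)%:R.

Lemma SC_pile_left_0 m : SC (pile_left m) 0 = m%:R.
Proof.
rewrite -[X in SC _ X]/(0%:R) SC_natr big_split_ord /=.
rewrite big1 ?add0r => [|i _]; last by rewrite pile_left_pos_lo.
by rewrite sum_ord_true // => i; rewrite pile_left_pos_hi.
Qed.

Lemma SC_pile_left_spread m (k : 'I_m) : SC (pile_left m) k.+1%:R = (m + m.-1)%:R.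
Proof.
rewrite SC_natr big_split_ord /= natrD -(sum_ord_neq k).
congr (_ + _); last by apply: eq_bigr => i _; rewrite pile_left_pos_hi eqSS.
by rewrite sum_ord_true // => i; rewrite pile_left_pos_lo.
Qed.

Lemma SC_pile_right_spread m (k : 'I_m) : SC (pile_right m) k%:R = (m.-1 + m)%:R.
Proof.
rewrite SC_natr big_split_ord /= natrD -(sum_ord_neq k).
congr (_ + _); first by apply: eq_bigr => i _; rewrite pile_right_pos_lo.
by rewrite sum_ord_true // => i; rewrite pile_right_pos_hi gtn_eqF.
Qed.

Lemma SC_pile_right_top m : SC (pile_right m) m%:R = m%:R.
Proof.
rewrite SC_natr big_split_ord /= [X in _ + X]big1 ?addr0 => [|i _]; last first.
  by rewrite pile_right_pos_hi eqxx.
by rewrite sum_ord_true // => i; rewrite pile_right_pos_lo ltn_eqF.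
Qed.

Lemma exp_SC_pile_left_add_right m (q : 'I_(m + m) -> R) :
  exp_SC q (pile_left m) + exp_SC q (pile_right m) =
  (m + m.-1 + m)%:R * \sum_(k < m + m) q k.
Proof.
have natr_homo g : {homo g : a b / (a <= b)%N} ->
    {homo (fun j => (g j)%:R : R) : a b / (a <= b)%N >-> a <= b}.
  by move=> hg a b /hg; rewrite ler_nat.
have stat_left := order_stat_nondecr (natr_homo _ (pile_left_pos_nondecr m)) (frefl _).
have stat_right := order_stat_nondecr (natr_homo _ (pile_right_pos_nondecr m)) (frefl _).
rewrite /exp_SC -big_split mulr_sumr !big_split_ord /=.
congr (_ + _); apply: eq_bigr => k _.
- rewrite stat_left ?stat_right ?ltn_addr //= pile_left_pos_lo pile_right_pos_lo.
  by rewrite SC_pile_left_0 SC_pile_right_spread -mulrDr mulrC -natrD addnA.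
- rewrite stat_left ?stat_right ?ltn_add2l //= pile_left_pos_hi pile_right_pos_hi.
  by rewrite SC_pile_left_spread SC_pile_right_top -mulrDr mulrC -natrD.
Qed.

Lemma SC_pile_left_opt m c : SC (pile_left m) 0 <= SC (pile_left m) c.
Proof.
rewrite SC_pile_left_0; apply: SC_ge_disjoint_pairs => i.
by rewrite /pile_left /= pile_left_pos_lo pile_left_pos_hi add0r ler1n.
Qed.

Lemma SC_pile_right_opt m c : SC (pile_right m) m%:R <= SC (pile_right m) c.
Proof.
rewrite SC_pile_right_top; apply: SC_ge_disjoint_pairs => i.
by rewrite /pile_right /= pile_right_pos_lo pile_right_pos_hi natr1 ler_nat.
Qed.

End IntervalCovering.

Theorem theorem6 (R : realType) (p : forall n : nat, 'I_n -> R)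
  (hp0 : forall (n : nat) (k : 'I_n), 0 <= p n k)
  (hp1 : forall n : nat, (0 < n)%N -> \sum_(k < n) p n k = 1) :
  forall r : R, r < 3 / 2 ->
    exists (n : nat) (s : 'I_n -> R) (c : R),
      (forall c' : R, SC s c <= SC s c') /\ r * SC s c < exp_SC (p n) s.
Proof.
move=> r hr.
have [m m_gt0 hm] : exists2 m, (0 < m)%N & 1 < (3 - 2 * r) * m%:R.
  have gap_gt0 : 0 < 3 - 2 * r by lra.
  exists (Num.bound (3 - 2 * r)^-1).+1 => //.
  rewrite -ltr_pdivrMl // mulr1.
  have inv_ge0 : 0 <= (3 - 2 * r)^-1 by rewrite invr_ge0 ltW.
  by apply: lt_le_trans (archi_boundP inv_ge0) _; rewrite ler_nat.
have ratio_gap : 2 * (r * m%:R) < (m + m.-1 + m)%:R.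
  by rewrite -subn1 !natrD natrB //; lra.
have := exp_SC_pile_left_add_right R m (p (m + m)%N).
rewrite hp1 ?addn_gt0 ?m_gt0 // mulr1.
case: (ltrP (r * m%:R) (exp_SC (p (m + m)%N) (pile_left R m))) => h_left h_sum.
- exists (m + m)%N, (pile_left R m), 0; split; first exact: SC_pile_left_opt.
  by rewrite SC_pile_left_0.
- exists (m + m)%N, (pile_right R m), m%:R; split; first exact: SC_pile_right_opt.
  by rewrite SC_pile_right_top; lra.
Qed.
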